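(* Every EDT-Nash equilibrium is an EDT equilibrium. In extensive-form games without absentmindedness, a strategy profile is an EDT-Nash equilibrium if and only if it is a CDT-Nash equilibrium. In extensive-form games with perfect recall, a strategy profile is an EDT-Nash equilibrium if and only if it is a Nash equilibrium.
   Context: An extensive-form game consists of a finite rooted tree (nodes $\mathcal H$, leaves $\mathcal Z$, actions $A_h$), players $\mathcal N$ plus chance (with fixed action distributions), utilities $u_i:\mathcal Z\to\mathbb R_{\ge0}$, and partitions $\mathcal I_i$ of each player's nodes into infosets with common action sets $A_I$. For a node $h$ with root-to-$h$ path $(h_0,\dots,h_{d-1})$ (excluding $h$), $\mathrm{obs}(h)=(i_k,I_k,a_k)_k$ lists the player at, infoset of, and action taken at each $h_k$; $\mathrm{obs}_i(h)$ is the subsequence with $i_k=i$. Player $i$ has perfect recall if $\mathrm{obs}_i(h)=\mathrm{obs}_i(h')$ for $h,h'$ in a common infoset of $i$; the game has perfect recall if all players do. The game has absentmindedness if some infoset appears more than once among the $I_k$ in $\mathrm{obs}(h)$ for some $h$. A behavioral strategy $\pi_i$ assigns $\pi_i(\cdot\mid I)\in\Delta(A_I)$; $\mathbb P(h\mid\pi)$ is the reach probability of $h$; $U_i(\pi)=\sum_z\mathbb P(z\mid\pi)u_i(z)$; realization equivalence means equal reach probabilities at all nodes. $\pi_i^{I\mapsto\sigma}$ plays $\sigma$ at $I$, otherwise $\pi_i$. Nash: each $\pi_i\in\arg\max U_i(\cdot,\pi_{-i})$. EDT equilibrium: for all $i$, $I\in\mathcal I_i$, $\pi_i(\cdot\mid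 I)\in\arg\max_{\sigma}U_i(\pi_i^{I\mapsto\sigma},\pi_{-i})$. CDT equilibrium: each $\pi_i$ is a KKT point of maximizing $U_i(\cdot,\pi_{-i})$ over $\prod_I\Delta(A_I)$. In a single-player game (Player 1): let $I^{\mathrm{1st}}$ be the nodes $h\in I$ such that $I$ does not appear in $\mathrm{obs}(h)$, $\mathbb P(I\mid\pi)=\sum_{h\in I^{\mathrm{1st}}}\mathbb P(h\mid\pi)$, and $\mathrm{Fr}(I\mid\pi)=\sum_{h\in I}\mathbb P(h\mid\pi)$. The CDT utility of $\sigma\in\Delta(A_I)$ is $U_1^{\mathrm{CDT}}(\sigma\mid\pi,I)=U_1(\pi)+\sum_{a\in A_I}(\sigma(a)-\pi(a\mid I))\,\partial U_1(\pi)/\partial\pi(a\mid I)$, where $U_1$ is viewed as a polynomial in the variables $\pi(a\mid I)$. A strategy $\pi$ is EDT-rational (resp. CDT-rational) if there is a sequence $(\pi^{(k)},\varepsilon^{(k)})_{k\in\mathbb N}$ with each $\pi^{(k)}$ fully mixed ($\pi^{(k)}(a\mid I)>0$ for all $I,a$), $\pi^{(k)}\to\pi$, $\varepsilon^{(k)}>0$, $\varepsilon^{(k)}\to0$, and for each $k$, all $I$ with $\mathbb P(I\mid\pi^{(k)})>0$ (resp. $\mathrm{Fr}(I\mid\pi^{(k)})>0$) and all $\sigma\in\Delta(A_I)$: $\frac{1}{\mathbb P(I\mid\pi^{(k)})}(U_1(\pi^{(k),I\mapsto\sigma})-U_1(\pi^{(k)}))\le\varepsilon^{(k)}$ (resp.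 $\frac{1}{\mathrm{Fr}(I\mid\pi^{(k)})}(U_1^{\mathrm{CDT}}(\sigma\mid\pi^{(k)},I)-U_1(\pi^{(k)}))\le\varepsilon^{(k)}$). A profile $\pi$ is an EDT-Nash (resp. CDT-Nash) equilibrium if it is an EDT (resp. CDT) equilibrium and for each player $i$, in the single-player game from $i$'s perspective where the others play the fixed $\pi_{-i}$, $\pi_i$ is realization-equivalent to an EDT-rational (resp. CDT-rational) strategy. *)

From HB Require Import structures.
From mathcomp Require Import all_boot all_order all_algebra.
From mathcomp Require Import all_classical all_reals topology normedtype sequences.
Set Implicit Arguments. Unset Strict Implicit. Unset Printing Implicit Defensive.
Import Order.TTheory GRing.Theory Num.Theory.
Import numFieldTopology.Exports numFieldNormedType.Exports.
Local Open Scope classical_set_scope.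
Local Open Scope ring_scope.

(*   acts I = A_I.  Chance nodes carry a fixed distribution p over the       *)
(*   actions leaving them; leaves carry a utility vector Pl -> R.            *)
(*   A node is identified by the sequence of actions from the root to it.    *)

Section Games.
Variable R : realType.
Variables Pl Info Act : finType.

Inductive label := Chance of (Act -> R) | Dec of Info.

Inductive tree :=
| Leaf : (Pl -> R) -> tree
| Node : label -> seq (Act * tree) -> tree.

Record game := Game {
  gtree : tree;
  owner : Info -> Pl;
  acts  : Info -> {set Act} }.

Definition child (cs : seq (Act * tree)) (a : Act) : option tree :=
  ohead [seq p.2 | p <- cs & p.1 == a].

Fixpoint sub (t : tree) (s : seq Act) : option tree :=
  match s with
  | [::] => Some t
  | a :: s' =>
      if t is Node _ cs then
        (if child cs a is Some t' then sub t' s' else None)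
      else None
  end.

Fixpoint steps (t : tree) (s : seq Act) : seq (label * Act) :=
  match s with
  | [::] => [::]
  | a :: s' =>
      match t with
      | Node l cs =>
          match child cs a with
          | Some t' => (l, a) :: steps t' s'
          | None => [::]
          end
      | Leaf _ => [::]
      end
  end.

Fixpoint nodes (t : tree) : seq (seq Act) :=
  match t with
  | Leaf _ => [:: [::]]
  | Node _ cs =>
      [::] :: (fix go (cs : seq (Act * tree)) : seq (seq Act) :=
                 match cs with
                 | [::] => [::]
                 | (a, t') :: cs' => map (cons a) (nodes t') ++ go cs'
                 end) cs
  end.

Variable G : game.

Definition Nodes := nodes (gtree G).

Definition inI (I : Info) (h : seq Act) : bool :=
  if sub (gtree G) h is Some (Node (Dec J) _) then J == I else false.

Definition isLeaf (h : seq Act) : bool :=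
  if sub (gtree G) h is Some (Leaf _) then true else false.

Definition util (h : seq Act) (i : Pl) : R :=
  if sub (gtree G) h is Some (Leaf u) then u i else 0.

Definition obs (h : seq Act) : seq (Pl * Info * Act) :=
  pmap (fun p : label * Act =>
          if p.1 is Dec J then Some (owner G J, J, p.2) else None)
       (steps (gtree G) h).

Definition obs_i (i : Pl) (h : seq Act) : seq (Pl * Info * Act) :=
  [seq q <- obs h | q.1.1 == i].

Definition perfect_recall : Prop :=
  forall I h h', h \in Nodes -> h' \in Nodes -> inI I h -> inI I h' ->
    obs_i (owner G I) h = obs_i (owner G I) h'.

Definition absentminded : Prop :=
  exists h, h \in Nodes /\ ~~ uniq [seq q.1.2 | q <- obs h].

Definition wf_game : Prop :=
  (forall I, (0 < #|acts G I|)%N) /\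
  forall h, h \in Nodes ->
    match sub (gtree G) h with
    | Some (Leaf u) => forall i, 0 <= u i
    | Some (Node l cs) =>
        uniq (map fst cs) /\
        match l with
        | Dec J => forall a, (a \in map fst cs) = (a \in acts G J)
        | Chance p => (forall a, a \in map fst cs -> 0 <= p a) /\
                      \sum_(a <- map fst cs) p a = 1
        end
    | None => True
    end.

Definition isDist (S : {set Act}) (sigma : Act -> R) : Prop :=
  (forall a, a \in S -> 0 <= sigma a) /\ \sum_(a in S) sigma a = 1.

Definition valid_profile (pi : Info -> Act -> R) : Prop :=
  forall I, isDist (acts G I) (pi I).

Definition valid_strat (i : Pl) (y : Info -> Act -> R) : Prop :=
  forall I, owner G I = i -> isDist (acts G I) (y I).

Definition replace (i : Pl) (y pi : Info -> Act -> R) : Info -> Act -> R :=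
  fun I => if owner G I == i then y I else pi I.

Definition deviate (pi : Info -> Act -> R) (I : Info) (sigma : Act -> R) :
  Info -> Act -> R := fun J => if J == I then sigma else pi J.

Definition factor (pi : Info -> Act -> R) (l : label) (a : Act) : R :=
  match l with Chance p => p a | Dec J => pi J a end.

Definition reach (pi : Info -> Act -> R) (h : seq Act) : R :=
  \prod_(p <- steps (gtree G) h) factor pi p.1 p.2.

Definition EU (i : Pl) (pi : Info -> Act -> R) : R :=
  \sum_(h <- Nodes | isLeaf h) reach pi h * util h i.

(* U_i as a polynomial in the single variable pi(a|I), all the other
   variables fixed at their values in pi *)
Definition Upoly (i : Pl) (pi : Info -> Act -> R) (I : Info) (a : Act) :
  {poly R} :=
  \sum_(h <- Nodes | isLeaf h)
    (\prod_(p <- steps (gtree G) h)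
       (if p.1 is Dec J then
          (if (J == I) && (p.2 == a) then 'X else (pi J p.2)%:P)
        else (factor pi p.1 p.2)%:P)) * (util h i)%:P.

Definition pdU (i : Pl) (pi : Info -> Act -> R) (I : Info) (a : Act) : R :=
  ((Upoly i pi I a)^`()).[pi I a].

Definition Nash (pi : Info -> Act -> R) : Prop :=
  forall i y, valid_strat i y -> EU i (replace i y pi) <= EU i pi.

Definition EDT_eq (pi : Info -> Act -> R) : Prop :=
  forall I sigma, isDist (acts G I) sigma ->
    EU (owner G I) (deviate pi I sigma) <= EU (owner G I) pi.

(* KKT conditions for maximizing U_i(., pi_{-i}) over prod_I Delta(A_I):
   dU/dpi(a|I) + mu(I,a) = lambda(I), mu >= 0, mu(I,a) pi(a|I) = 0
   (primal feasibility is valid_profile) *)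
Definition CDT_eq (pi : Info -> Act -> R) : Prop :=
  forall i, exists (lam : Info -> R) (mu : Info -> Act -> R),
    forall I a, owner G I = i -> a \in acts G I ->
      [/\ 0 <= mu I a, mu I a * pi I a = 0 & pdU i pi I a + mu I a = lam I].

Definition firstIn (I : Info) (h : seq Act) : bool :=
  inI I h && (I \notin [seq q.1.2 | q <- obs h]).

Definition PI (pi : Info -> Act -> R) (I : Info) : R :=
  \sum_(h <- Nodes | firstIn I h) reach pi h.

Definition Fr (pi : Info -> Act -> R) (I : Info) : R :=
  \sum_(h <- Nodes | inI I h) reach pi h.

Definition UCDT (i : Pl) (sigma : Act -> R) (pi : Info -> Act -> R) (I : Info) : R :=
  EU i pi + \sum_(a in acts G I) (sigma a - pi I a) * pdU i pi I a.

Definition approx_seq (i : Pl) (y : Info -> Act -> R)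
  (x : nat -> Info -> Act -> R) (eps : nat -> R) : Prop :=
  [/\ forall k, valid_strat i (x k),
      forall k I a, owner G I = i -> a \in acts G I -> 0 < x k I a,
      forall I a, owner G I = i -> a \in acts G I ->
        (fun k => x k I a) @ \oo --> y I a,
      forall k, 0 < eps k
    & eps @ \oo --> 0].

Definition EDT_rational (i : Pl) (pi y : Info -> Act -> R) : Prop :=
  exists x eps, approx_seq i y x eps /\
    forall k I sigma, owner G I = i ->
      0 < PI (replace i (x k) pi) I -> isDist (acts G I) sigma ->
      (EU i (deviate (replace i (x k) pi) I sigma) - EU i (replace i (x k) pi))
        / PI (replace i (x k) pi) I <= eps k.

Definition CDT_rational (i : Pl) (pi y : Info -> Act -> R) : Prop :=
  exists x eps, approx_seq i y x eps /\
    forall k I sigma, owner G I = i ->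
      0 < Fr (replace i (x k) pi) I -> isDist (acts G I) sigma ->
      (UCDT i sigma (replace i (x k) pi) I - EU i (replace i (x k) pi))
        / Fr (replace i (x k) pi) I <= eps k.

Definition real_equiv (i : Pl) (pi y : Info -> Act -> R) : Prop :=
  forall h, h \in Nodes -> reach (replace i y pi) h = reach pi h.

Definition EDT_Nash (pi : Info -> Act -> R) : Prop :=
  EDT_eq pi /\ forall i, exists y,
    [/\ valid_strat i y, EDT_rational i pi y & real_equiv i pi y].

Definition CDT_Nash (pi : Info -> Act -> R) : Prop :=
  CDT_eq pi /\ forall i, exists y,
    [/\ valid_strat i y, CDT_rational i pi y & real_equiv i pi y].

End Games.

(* Without absentmindedness a path meets each infoset at most once, so the
   expected utility is affine in the behaviour at any single infoset: deviating
   there is exactly its first-order (CDT) expansion, and P(I) = Fr(I).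

   Perfect recall excludes absentmindedness and makes player i's own
   probability of reaching an infoset J well defined.  Telescoping the reach
   probabilities along each path then writes U(z) - U(x) as a sum over i's
   infosets J of this own reach under z times the gain of the one-shot
   deviation from x to z at J.  Hence an EDT-rational strategy, whose one-shot
   gains are eventually bounded by vanishing epsilons, is optimal.
   Conversely, a Nash strategy is first repaired, by backward induction on
   the number of own moves, at the infosets its own play never reaches; the
   result is realization equivalent and sequentially optimal, and its uniform
   trembles witness EDT-rationality. *)

From Pilot Require Import Defs.
From HB Require Import structures.
From mathcomp Require Import all_boot all_order all_algebra.
From mathcomp Require Import all_classical all_reals topology normedtype sequences.
From mathcomp Require Import ring.
From Stdlib Require List.
Set Implicit Arguments. Unset Strict Implicit. Unset Printing Implicit Defensive.
Import Order.TTheory GRing.Theory Num.Theory.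
Import numFieldTopology.Exports numFieldNormedType.Exports.
Local Open Scope classical_set_scope.
Local Open Scope ring_scope.

Lemma In_mem (T : eqType) (x : T) (s : seq T) : List.In x s -> x \in s.
Proof. by elim: s => [|y s IH] //= [->|/IH]; rewrite in_cons ?eqxx // => ->; rewrite orbT. Qed.

Lemma hasP_In (X : Type) (P : pred X) (s : seq X) :
  reflect (exists2 x, List.In x s & P x) (has P s).
Proof.
elim: s => [|x s IH] /=; first by right; case.
case Px: (P x); first by left; exists x => //; left.
apply: (iffP IH) => [[y m Py]|[y [<-|m] Py]]; last by exists y.
  by exists y => //; right.
by rewrite Px in Py.
Qed.

Section Splits.
Variable X : Type.
Implicit Types (p : X) (st : seq X) (q : seq X * X * seq X).

Definition cons_split p q := (p :: q.1.1, q.1.2, q.2).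

(* Steps carry the chance distributions, which are functions, so lists of
   steps have no decidable equality: membership in them is [List.In]. *)
Fixpoint splits st : seq (seq X * X * seq X) :=
  if st is p :: st' then ([::], p, st') :: map (cons_split p) (splits st')
  else [::].

Lemma In_splits_cons p st q :
  List.In q (splits (p :: st)) <->
  q = ([::], p, st) \/ exists2 q', List.In q' (splits st) & q = cons_split p q'.
Proof.
rewrite /=; split=> [[<-|/List.in_map_iff [q' [<- m]]]|[->|[q' m ->]]].
- by left.
- by right; exists q'.
- by left.
- by right; apply: List.in_map.
Qed.

Lemma cat_splits st q : List.In q (splits st) -> q.1.1 ++ q.1.2 :: q.2 = st.
Proof.
elim: st q => [|p st IH] q //= /In_splits_cons [->|[q' m ->]] //=.
by rewrite IH.
Qed.

Lemma splits_post st q q' : List.In q (splits st) -> List.In q' (splits q.2) ->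
  List.In (q.1.1 ++ q.1.2 :: q'.1.1, q'.1.2, q'.2) (splits st).
Proof.
elim: st q => [|p st IH] q //= /In_splits_cons [->|[q1 m ->]] m'.
  by right; apply: List.in_map.
by right; exact: (List.in_map (cons_split p) _ _ (IH _ m m')).
Qed.

Lemma splits_pre st q q' : List.In q (splits st) -> List.In q' (splits q.1.1) ->
  List.In (q'.1.1, q'.1.2, q'.2 ++ q.1.2 :: q.2) (splits st).
Proof.
elim: st q q' => [|p st IH] q q' //= /In_splits_cons [->//|[q1 m ->]].
case/In_splits_cons => [->|[q2 m2 ->]]; first by left; rewrite (cat_splits m).
by right; exact: (List.in_map (cons_split p) _ _ (IH _ _ m m2)).
Qed.

Lemma splits_of_In st p : List.In p st -> exists2 q, List.In q (splits st) & q.1.2 = p.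
Proof.
elim: st => [|p' st IH] //= [->|/IH [q m e]]; first by exists ([::], p, st); first left.
by exists (cons_split p' q) => //; right; apply: List.in_map.
Qed.

Lemma has_splits (P : pred X) st : has P st -> exists2 q, List.In q (splits st) & P q.1.2.
Proof.
elim: st => [|p st IH] //= /orP[Pp|/IH [q m Pq]]; first by exists ([::], p, st); first left.
by exists (cons_split p q) => //; right; apply: List.in_map.
Qed.

Lemma count_gt1_splits (P : pred X) st : (1 < count P st)%N ->
  exists2 q, List.In q (splits st) & P q.1.2 && has P q.2.
Proof.
elim: st => [|p st IH] //=; case Pp: (P p) => /= h.
  by exists ([::], p, st); [left | rewrite /= Pp has_count].
have [q m Pq] := IH h; exists (cons_split p q) => //; right; exact: List.in_map.
Qed.

End Splits.

Section BigIn.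
Context {T X : Type} {idx : T} {op : T -> T -> T}.

Lemma eq_big_In (s : seq X) (F F' : X -> T) :
  (forall q, List.In q s -> F q = F' q) ->
  \big[op/idx]_(q <- s) F q = \big[op/idx]_(q <- s) F' q.
Proof.
elim: s => [|x s IH] e; rewrite ?big_nil // !big_cons e; last by left.
by rewrite IH // => q m; apply: e; right.
Qed.

Lemma big_ind_In (K : T -> Prop) (s : seq X) (F : X -> T) :
  K idx -> (forall a b, K a -> K b -> K (op a b)) ->
  (forall q, List.In q s -> K (F q)) -> K (\big[op/idx]_(q <- s) F q).
Proof.
move=> K0 Kop; elim: s => [|x s IH] KF; rewrite ?big_nil ?big_cons //.
by apply: Kop; [apply: KF; left | apply: IH => q m; apply: KF; right].
Qed.

End BigIn.

Lemma prodrB_splits (R : comPzRingType) (X : Type) (f g : X -> R) (st : seq X) :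
  \prod_(p <- st) f p - \prod_(p <- st) g p =
  \sum_(q <- splits st) (\prod_(p <- q.1.1) f p) * (f q.1.2 - g q.1.2) * \prod_(p <- q.2) g p.
Proof.
elim: st => [|x st IH]; first by rewrite !big_nil subrr.
rewrite /= !big_cons big_map big_nil mul1r.
have -> : f x * \prod_(p <- st) f p - g x * \prod_(p <- st) g p =
   (f x - g x) * \prod_(p <- st) g p + f x * (\prod_(p <- st) f p - \prod_(p <- st) g p).
  by ring.
by rewrite IH mulr_sumr; congr (_ + _); apply: eq_bigr => q _; rewrite big_cons !mulrA.
Qed.

Lemma cvg_prod_In (R : numFieldType) (X : Type) (s : seq X) (F : nat -> X -> R) (L : X -> R) :
  (forall q, List.In q s -> (fun k => F k q) @ \oo --> L q) ->
  (fun k => \prod_(q <- s) F k q) @ \oo --> \prod_(q <- s) L q.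
Proof.
elim: s => [|x s IH] h.
  rewrite big_nil; under eq_fun do rewrite big_nil; exact: cvg_cst.
rewrite big_cons; under eq_fun do rewrite big_cons.
by apply: cvgM; [apply: h; left | apply: IH => q m; apply: h; right].
Qed.

Section Trees.
Variables (R : realType) (Pl Info Act : finType).
Notation tree := (tree R Pl Info Act).
Implicit Types (t : tree) (cs : seq (Act * tree)) (a : Act) (s : seq Act).

Lemma child_cons b t cs a :
  child ((b, t) :: cs) a = if b == a then Some t else child cs a.
Proof. by rewrite /child /=; case: (b == a). Qed.

Lemma child_In cs a t : child cs a = Some t -> List.In (a, t) cs.
Proof.
elim: cs => [|[b t'] cs IH] //=; rewrite child_cons.
by case: eqP => [-> [->]|_ /IH]; [left|right].
Qed.

Lemma child_fst cs a t : child cs a = Some t -> a \in map fst cs.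
Proof. by move/child_In/(List.in_map fst)/In_mem. Qed.

Lemma child_of_fst cs a : a \in map fst cs -> exists t, child cs a = Some t.
Proof.
elim: cs => [|[b t'] cs IH] //=; rewrite child_cons in_cons.
by case: (eqVneq b a) => [|nb /IH] //; exists t'.
Qed.

Lemma child_of_In cs a t :
  uniq (map fst cs) -> List.In (a, t) cs -> child cs a = Some t.
Proof.
elim: cs => [|[b t'] cs IH] //= /andP[nb u]; rewrite child_cons.
case=> [[-> ->]|m]; first by rewrite eqxx.
case: eqP => [eba|_]; last exact: IH.
by case/negP: nb; rewrite eba; apply/In_mem/(List.in_map fst _ _ m).
Qed.

Lemma mem_nodes_cons l cs a s :
  reflect (exists2 p, List.In p cs & (p.1 == a) && (s \in nodes p.2))
          (a :: s \in nodes (Node l cs)).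
Proof.
suff -> : (a :: s \in nodes (Node l cs)) =
          has (fun p => (p.1 == a) && (s \in nodes p.2)) cs by apply: hasP_In.
rewrite in_cons /=; elim: cs => [|[b t'] cs IH] //=.
rewrite mem_cat IH; congr (_ || _).
apply/mapP/idP => [[s' m [-> ->]]|/andP[/eqP -> m]]; first by rewrite eqxx.
by exists s.
Qed.

Lemma nil_nodes t : [::] \in nodes t.
Proof. by case: t => [u|l cs]; rewrite /= in_cons eqxx. Qed.

Lemma sub_nodes t s x : sub t s = Some x -> s \in nodes t.
Proof.
elim: s t => [|a s IH] t /=; first by rewrite nil_nodes.
case: t => [//|l cs]; case ec: (child cs a) => [t'|//] /IH m.
by apply/mem_nodes_cons; exists (a, t'); [exact: child_In | rewrite eqxx].
Qed.

Definition uniq_children (o : option tree) : Prop :=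
  if o is Some (Node _ cs) then uniq (map fst cs) else True.

Lemma nodes_sub t s :
  (forall u, u \in nodes t -> uniq_children (sub t u)) ->
  s \in nodes t -> exists x, sub t s = Some x.
Proof.
elim: s t => [|a s IH] t U /=; first by exists t.
case: t U => [u|l cs] U; first by rewrite /= mem_seq1.
case/mem_nodes_cons => -[b t'] m /andP[/= /eqP eb ms]; subst b.
have u0 := U [::] (nil_nodes _); rewrite /= in u0.
rewrite (child_of_In u0 m); apply: IH ms => v mv.
have: a :: v \in nodes (Node l cs) by apply/mem_nodes_cons; exists (a, t'); rewrite ?eqxx.
by move/U; rewrite /= (child_of_In u0 m).
Qed.

Lemma nodes_take t s j : s \in nodes t -> take j s \in nodes t.
Proof.
elim: s t j => [|a s IH] t [|j] //=; rewrite ?nil_nodes //.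
case: t => [u|l cs]; first by rewrite /= mem_seq1.
case/mem_nodes_cons => p m /andP[ea ms].
by apply/mem_nodes_cons; exists p; rewrite // ea IH.
Qed.

Lemma sub_rcons t s l cs a x :
  sub t s = Some (Node l cs) -> child cs a = Some x ->
  sub t (rcons s a) = Some x /\ steps t (rcons s a) = rcons (steps t s) (l, a).
Proof.
elim: s t => [|b s IH] t /=; first by move=> [->] ->.
case: t => [//|l' cs']; case: (child cs' b) => [t'|//] e ec.
by case: (IH _ e ec) => -> ->.
Qed.

Lemma splits_steps t s x : sub t s = Some x ->
  forall q, List.In q (splits (steps t s)) ->
  exists2 cs, sub t (take (size q.1.1) s) = Some (Node q.1.2.1 cs) &
    steps t (take (size q.1.1) s) = q.1.1 /\ q.1.2.2 \in map fst cs.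
Proof.
elim: s t => [|a s IH] t //=; case: t => [//|l cs]; case ec: (child cs a) => [t'|//] e q.
case/In_splits_cons => [-> | [q' m ->]] /=.
  by exists cs => //; split; last exact: child_fst ec.
by have [cs' e1 [e2 e3]] := IH _ e _ m; exists cs'; rewrite ec ?e1 ?e2.
Qed.

End Trees.

Lemma not_uniq_count (T : eqType) (s : seq T) :
  ~~ uniq s -> exists x, (1 < count_mem x s)%N.
Proof.
elim: s => [|x s IH] //=; rewrite negb_and negbK => /orP[xs|/IH [y c]].
  by exists x; rewrite /= eqxx add1n ltnS -has_count has_pred1.
by exists y; apply: leq_trans c (leq_addl _ _).
Qed.

Section GameStructure.
Variables (R : realType) (Pl Info Act : finType) (G : game R Pl Info Act).
Notation label := (label R Info Act).
Notation t := (gtree G).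
Notation dec J := (@Dec R Info Act J).
Implicit Types (J : Info) (h : seq Act) (p : label * Act)
  (q : seq (label * Act) * (label * Act) * seq (label * Act)).

Definition isDec J p : bool := if p.1 is Dec K then K == J else false.

Definition owned_by (i : Pl) p : bool := if p.1 is Dec K then owner G K == i else false.

Definition legal_step p : bool :=
  match p.1 with Dec J => p.2 \in acts G J | Chance f => 0 <= f p.2 end.

Lemma isDecP J p : isDec J p -> p.1 = dec J.
Proof. by case: p => [[f|K] b] //= /eqP ->. Qed.

Lemma count_isDec J h :
  count (isDec J) (steps t h) = count_mem J [seq o.1.2 | o <- obs G h].
Proof. by rewrite /obs; elim: (steps t h) => [|[[f|K] b] st IH] //=; rewrite IH. Qed.

Lemma size_obs_i i h : size (obs_i G i h) = count (owned_by i) (steps t h).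
Proof.
by rewrite /obs_i /obs size_filter; elim: (steps t h) => [|[[f|K] b] st IH] //=; rewrite IH.
Qed.

Hypothesis wf : wf_game G.

Lemma Nodes_sub h : h \in Nodes G -> exists x, sub t h = Some x.
Proof.
apply: nodes_sub => u mu; have := (proj2 wf) u mu.
by case: (sub t u) => [[v|l cs]|] //= [].
Qed.

Lemma Nodes_splits h q : h \in Nodes G -> List.In q (splits (steps t h)) ->
  [/\ take (size q.1.1) h \in Nodes G, steps t (take (size q.1.1) h) = q.1.1 &
     exists2 cs, sub t (take (size q.1.1) h) = Some (Node q.1.2.1 cs) & q.1.2.2 \in map fst cs].
Proof.
move=> mh mq; have [x e] := Nodes_sub mh.
have [cs e1 [e2 e3]] := splits_steps e mq.
by split => //; [exact: nodes_take | exists cs].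
Qed.

Lemma legal_splits h q : h \in Nodes G -> List.In q (splits (steps t h)) -> legal_step q.1.2.
Proof.
move=> mh mq; have [m1 _ [cs e1 e2]] := Nodes_splits mh mq.
have := (proj2 wf) _ m1; rewrite e1 /legal_step => -[_].
by case: q.1.2.1 => [f [hn _]|K <-] //; apply: hn.
Qed.

Lemma inI_splits h q J : h \in Nodes G -> List.In q (splits (steps t h)) ->
  q.1.2.1 = dec J -> inI G J (take (size q.1.1) h).
Proof. by move=> mh mq eJ; have [_ _ [cs e1 _]] := Nodes_splits mh mq; rewrite /inI e1 eJ. Qed.

Lemma legal_steps h p : h \in Nodes G -> List.In p (steps t h) -> legal_step p.
Proof. by move=> mh mp; have [q mq <-] := splits_of_In mp; exact: legal_splits mh mq. Qed.

Lemma perfect_recall_not_absentminded : perfect_recall G -> ~ absentminded G.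
Proof.
move=> PR [h [mh nu]]; have [J] := not_uniq_count nu.
rewrite -count_isDec => /count_gt1_splits.
case=> q mq /andP[dq /has_splits [q' mq' dq']].
have mq'' := splits_post mq mq'.
have [m1 e1 _] := Nodes_splits mh mq.
have [m2 e2 _] := Nodes_splits mh mq''.
have := PR J _ _ m1 m2 (inI_splits mh mq (isDecP dq)) (inI_splits mh mq'' (isDecP dq')).
move/(congr1 size); rewrite !size_obs_i e1 e2 /= count_cat /= /owned_by (isDecP dq) eqxx.
by move/eqP; rewrite -{1}(addn0 (count _ _)) eqn_add2l.
Qed.

Section NoAbsentmindedness.
Hypothesis nAM : ~ absentminded G.

Lemma count_isDec_le1 h J : h \in Nodes G -> (count (isDec J) (steps t h) <= 1)%N.
Proof.
move=> mh; rewrite count_isDec count_uniq_mem ?leq_b1 //.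
by apply: contra_notT nAM => nu; exists h.
Qed.

Lemma count_isDec_inI h J : h \in Nodes G -> inI G J h -> count (isDec J) (steps t h) = 0%N.
Proof.
rewrite /inI => mh; case eh: (sub t h) => [[u|[f|K] cs]|] //= /eqP eK; subst K.
have [a aA] : exists a, a \in acts G J by have := (proj1 wf) J; rewrite card_gt0 => /set0Pn.
have := (proj2 wf) _ mh; rewrite eh => -[_ /= hc].
have [y ey] := child_of_fst (etrans (hc a) aA).
have [e1 e2] := sub_rcons eh ey.
have := count_isDec_le1 J (sub_nodes e1).
by rewrite e2 -cats1 count_cat /= /isDec /= eqxx addn1 ltnS leqn0 => /eqP.
Qed.

Lemma firstInE h J : h \in Nodes G -> firstIn G J h = inI G J h.
Proof.
move=> mh; rewrite /firstIn; case iJ: (inI G J h) => //=.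
have /eqP := count_isDec_inI mh iJ; rewrite count_isDec.
by rewrite -leqn0 leqNgt -has_count has_pred1.
Qed.

End NoAbsentmindedness.

End GameStructure.

Section Dirac.
Context {R : realType} {Act : finType}.

Definition dirac (b : Act) : Act -> R := fun a => (a == b)%:R.

Lemma dirac_isDist (A : {set Act}) b : b \in A -> isDist A (dirac b).
Proof.
move=> bA; split=> [a _|]; first by rewrite /dirac ler0n.
rewrite (bigD1 b) //= /dirac eqxx big1 ?addr0 // => a /andP[_ ne].
by rewrite (negbTE ne).
Qed.

Lemma sum_dirac (A : {set Act}) b (F : Act -> R) : b \in A ->
  \sum_(a in A) dirac b a * F a = F b.
Proof.
move=> bA; rewrite (bigD1 b) //= /dirac eqxx mul1r big1 ?addr0 // => a /andP[_ ne].
by rewrite (negbTE ne) mul0r.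
Qed.

End Dirac.

Section EDT_CDT.
Variables (R : realType) (Pl Info Act : finType) (G : game R Pl Info Act).
Notation label := (label R Info Act).
Notation t := (gtree G).
Implicit Types (p : Info -> Act -> R) (I : Info) (a : Act) (s : Act -> R)
  (st : seq (label * Act)).

Definition step_poly p I a (q : label * Act) : {poly R} :=
  if q.1 is Dec J then (if (J == I) && (q.2 == a) then 'X else (p J q.2)%:P)
  else (Defs.factor p q.1 q.2)%:P.

(* The summand of a leaf with steps [st] in [Upoly]. *)
Definition leaf_poly p I a st : {poly R} := \prod_(q <- st) step_poly p I a q.

Lemma leaf_poly_cons p I a q st :
  leaf_poly p I a (q :: st) = step_poly p I a q * leaf_poly p I a st.
Proof. exact: big_cons. Qed.

Lemma step_poly_const p I a q : ~~ isDec I q -> step_poly p I a q = (Defs.factor p q.1 q.2)%:P.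
Proof. by rewrite /isDec /step_poly; case: q.1 => [f|K] //= /negbTE ->. Qed.

Lemma factor_deviate_const p I s q :
  ~~ isDec I q -> Defs.factor (deviate p I s) q.1 q.2 = Defs.factor p q.1 q.2.
Proof. by rewrite /isDec /deviate; case: q.1 => [f|K] //= /negbTE ->. Qed.

Lemma leaf_poly_const p I a st : count (isDec I) st = 0%N ->
  leaf_poly p I a st = (\prod_(q <- st) Defs.factor p q.1 q.2)%:P.
Proof.
rewrite /leaf_poly; elim: st => [|q st IH]; rewrite ?big_nil ?big_cons //=.
case dq: (isDec I q) => //= h.
by rewrite IH // step_poly_const ?dq // polyCM.
Qed.

Lemma prod_deviate_const p I s st : count (isDec I) st = 0%N ->
  \prod_(q <- st) Defs.factor (deviate p I s) q.1 q.2 = \prod_(q <- st) Defs.factor p q.1 q.2.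
Proof.
elim: st => [|q st IH]; rewrite ?big_nil ?big_cons //=.
case dq: (isDec I q) => //= h.
by rewrite IH // factor_deviate_const ?dq.
Qed.

(* Along a path that visits I at most once, the reach probability is affine
   in pi(.|I), so deviating at I is exactly its first-order expansion. *)
Lemma prod_deviate_sub p I s st :
  (count (isDec I) st <= 1)%N ->
  (forall q, List.In q st -> isDec I q -> q.2 \in acts G I) ->
  \prod_(q <- st) Defs.factor (deviate p I s) q.1 q.2 - \prod_(q <- st) Defs.factor p q.1 q.2 =
  \sum_(a in acts G I) (s a - p I a) * ((leaf_poly p I a st)^`()).[p I a].
Proof.
elim: st => [|q st IH] c hA.
  rewrite !big_nil subrr big1 // => a _.
  by rewrite /leaf_poly big_nil derivC horner0 mulr0.
rewrite !big_cons; under [RHS]eq_bigr => a _ do rewrite leaf_poly_cons.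
case dq: (isDec I q).
- move: c; rewrite /= dq add1n ltnS leqn0 => /eqP c0.
  have bA : q.2 \in acts G I by apply: hA => //; left.
  rewrite prod_deviate_const // (isDecP dq) /= /deviate eqxx -mulrBl.
  rewrite (bigD1 q.2) //= [X in _ = _ + X]big1 ?addr0 => [|a /andP[_ ne]];
    rewrite leaf_poly_const // /step_poly (isDecP dq) eqxx /= derivM derivC mulr0 addr0.
    by rewrite eqxx derivX mul1r hornerC.
  by rewrite eq_sym (negbTE ne) derivC mul0r horner0 mulr0.
- rewrite factor_deviate_const ?dq // -mulrBr IH; first last.
  + by move=> q' m; apply: hA; right.
  + by move: c; rewrite /= dq.
  rewrite mulr_sumr; apply: eq_bigr => a _.
  by rewrite step_poly_const ?dq // deriv_mulC hornerCM mulrCA.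
Qed.

Hypothesis wf : wf_game G.
Hypothesis nAM : ~ absentminded G.

Lemma EU_deviate i p I s :
  EU G i (deviate p I s) = EU G i p + \sum_(a in acts G I) (s a - p I a) * pdU G i p I a.
Proof.
apply/eqP; rewrite addrC -subr_eq; apply/eqP.
rewrite /EU -sumrB.
under [RHS]eq_bigr => a _ do rewrite /pdU /Upoly raddf_sum horner_sum mulr_sumr.
rewrite exchange_big /= big_seq_cond [RHS]big_seq_cond; apply: eq_bigr => h /andP[mh _].
rewrite -mulrBl prod_deviate_sub ?mulr_suml; first last.
- by move=> q mq dq; have := legal_steps wf mh mq; rewrite /legal_step (isDecP dq).
- exact: count_isDec_le1.
apply: eq_bigr => a _.
by rewrite -/(leaf_poly p I a _) derivM derivC mulr0 addr0 hornerM hornerC mulrA.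
Qed.

Lemma UCDT_deviate i s p I : UCDT G i s p I = EU G i (deviate p I s).
Proof. by rewrite EU_deviate. Qed.

Lemma PI_Fr p I : PI G p I = Fr G p I.
Proof.
rewrite /PI /Fr big_seq_cond [RHS]big_seq_cond; apply: eq_bigl => h.
by case mh: (h \in Nodes G) => //=; rewrite firstInE.
Qed.

Lemma EDT_eq_iff_CDT_eq pi : valid_profile G pi -> (EDT_eq G pi <-> CDT_eq G pi).
Proof.
move=> vp; split => [E i|C I s sd].
- pose lam I := \sum_(a in acts G I) pi I a * pdU G i pi I a.
  exists lam, (fun I a => lam I - pdU G i pi I a) => I a oI aA.
  have le_lam b : b \in acts G I -> pdU G i pi I b <= lam I.
    move=> bA; have := E I _ (dirac_isDist bA).
    rewrite oI EU_deviate -{2}[EU G i pi]addr0 lerD2l.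
    under eq_bigr => c _ do rewrite mulrBl.
    by rewrite sumrB subr_le0 sum_dirac.
  have mu_ge0 b : b \in acts G I -> 0 <= pi I b * (lam I - pdU G i pi I b).
    by move=> bA; rewrite mulr_ge0 ?subr_ge0 ?le_lam //; apply: (proj1 (vp I)).
  split; last by rewrite addrC subrK.
  + by rewrite subr_ge0 le_lam.
  + rewrite mulrC; apply: (psumr_eq0P mu_ge0) => //.
    under eq_bigr => c _ do rewrite mulrBr.
    by rewrite sumrB -mulr_suml (proj2 (vp I)) mul1r subrr.
- rewrite EU_deviate -{2}[EU G _ pi]addr0 lerD2l.
  have [lam [mu kkt]] := C (owner G I).
  (* With pdU = lam - mu, the gain is -sum_a s(a) mu(a) by complementary slackness. *)
  pose gain a := (s a - pi I a) * lam I - s a * mu I a + pi I a * mu I a.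
  rewrite (eq_bigr gain) => [|a aA]; last first.
    by have [_ _ e] := kkt I a erefl aA; rewrite /gain -e; ring.
  rewrite /gain !big_split /= -mulr_suml sumrB (proj2 sd) (proj2 (vp I)) subrr mul0r add0r.
  rewrite [X in _ + X]big1 ?addr0 => [|a aA]; last first.
    by have [_ e _] := kkt I a erefl aA; rewrite mulrC.
  rewrite sumrN oppr_le0 sumr_ge0 // => a aA; have [m _ _] := kkt I a erefl aA.
  by rewrite mulr_ge0 //; apply: (proj1 sd).
Qed.

Lemma EDT_rational_iff_CDT_rational i pi y :
  EDT_rational G i pi y <-> CDT_rational G i pi y.
Proof.
by split => -[x [eps [ap h]]]; exists x, eps; split => // k I s oI;
  [rewrite -PI_Fr UCDT_deviate | rewrite PI_Fr -UCDT_deviate]; exact: h.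
Qed.

Lemma EDT_Nash_iff_CDT_Nash pi : valid_profile G pi -> (EDT_Nash G pi <-> CDT_Nash G pi).
Proof.
move=> vp; split=> -[e h]; split; try by apply/(EDT_eq_iff_CDT_eq vp).
all: by move=> i; have [y [v r q]] := h i; exists y; split=> //;
  exact/EDT_rational_iff_CDT_rational.
Qed.

End EDT_CDT.

Section Extensionality.
Variables (R : realType) (Pl Info Act : finType) (G : game R Pl Info Act).
Implicit Types p : Info -> Act -> R.

Lemma reach_ext p p' h : p =2 p' -> reach G p h = reach G p' h.
Proof. by move=> e; apply: eq_bigr => -[[f|K] b] _ //=; rewrite e. Qed.

Lemma EU_ext j p p' : p =2 p' -> EU G j p = EU G j p'.
Proof. by move=> e; apply: eq_bigr => h _; rewrite (reach_ext _ e). Qed.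

Lemma replace_self i p : replace G i p p =2 p.
Proof. by move=> K b; rewrite /replace; case: ifP. Qed.

Lemma deviate_replace i x p J s : owner G J = i ->
  deviate (replace G i x p) J s =2 replace G i (deviate x J s) p.
Proof. by move=> oJ K b; rewrite /deviate /replace; case: eqP => [->|//]; rewrite oJ eqxx. Qed.

Lemma replace_deviate p I s : replace G (owner G I) (deviate p I s) p =2 deviate p I s.
Proof.
move=> K b; rewrite /replace /deviate.
by case: (eqVneq K I) => [->|_]; rewrite ?eqxx //; case: ifP.
Qed.

Lemma Nash_EDT_eq p : valid_profile G p -> Nash G p -> EDT_eq G p.
Proof.
move=> vp NE I s sd; rewrite -(EU_ext _ (replace_deviate p I s)); apply: NE => K oK.
by rewrite /deviate; case: eqP => [->|_]; [exact: sd | exact: vp].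
Qed.

End Extensionality.

Section PerfectRecall.
Variables (R : realType) (Pl Info Act : finType) (G : game R Pl Info Act).
Variables (i : Pl) (pi : Info -> Act -> R).
Notation label := (label R Info Act).
Notation t := (gtree G).
Notation dec J := (@Dec R Info Act J).
Implicit Types (x y z : Info -> Act -> R) (J : Info) (a : Act) (s : Act -> R)
  (h : seq Act) (p : label * Act) (st : seq (label * Act)).

Definition own_factor x p : R :=
  if p.1 is Dec K then (if owner G K == i then x K p.2 else 1) else 1.

Definition others_factor p : R :=
  if p.1 is Dec K then (if owner G K == i then 1 else pi K p.2) else Defs.factor pi p.1 p.2.

Definition own_reach x st := \prod_(p <- st) own_factor x p.

Definition others_reach st := \prod_(p <- st) others_factor p.

Definition step_factor x p := Defs.factor (replace G i x pi) p.1 p.2.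

Lemma step_factorE x p : step_factor x p = own_factor x p * others_factor p.
Proof.
rewrite /step_factor /own_factor /others_factor /replace.
by case: p => [[f|K] b] /=; rewrite ?mul1r //; case: ifP; rewrite ?mulr1 ?mul1r.
Qed.

Lemma prod_step_factor x st :
  \prod_(p <- st) step_factor x p = own_reach x st * others_reach st.
Proof. by rewrite -big_split; apply: eq_bigr => p _; rewrite step_factorE. Qed.

Lemma reach_replaceE x h :
  reach G (replace G i x pi) h = \prod_(p <- steps t h) step_factor x p.
Proof. by []. Qed.

Lemma own_reach_obs x h :
  own_reach x (steps t h) = \prod_(o <- obs_i G i h) x o.1.2 o.2.
Proof.
rewrite /own_reach /obs_i /obs; elim: (steps t h) => [|[[f|K] b] st IH];
  rewrite ?big_nil ?big_cons //= ?mul1r //.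
by rewrite /own_factor /=; case: ifP; rewrite ?big_cons ?mul1r IH.
Qed.

Definition infoset_node J : seq Act := nth [::] (Nodes G) (find (inI G J) (Nodes G)).

Lemma infoset_node_Nodes J : infoset_node J \in Nodes G.
Proof.
rewrite /infoset_node; case: (ltnP (find (inI G J) (Nodes G)) (size (Nodes G))) => h.
  exact: mem_nth.
by rewrite nth_default // nil_nodes.
Qed.

Lemma infoset_node_inI J h : h \in Nodes G -> inI G J h -> inI G J (infoset_node J).
Proof. by move=> mh iJ; apply: nth_find; apply/hasP; exists h. Qed.

Definition own_reach_at x J := own_reach x (steps t (infoset_node J)).

Definition others_mass J := \sum_(h <- Nodes G | inI G J h) others_reach (steps t h).

(* Up to the factor [own_reach_at x J], the value of playing a at J and x
   afterwards: the summand of a leaf is its utility times the others' reach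
   before J and the full reach after J. *)
Definition cont_value x J a := \sum_(h <- Nodes G | isLeaf G h) util G h i *
  \sum_(q <- splits (steps t h))
     (if isDec J q.1.2 && (q.1.2.2 == a)
      then others_reach q.1.1 * \prod_(p <- q.2) step_factor x p else 0).

Definition dev_gain x J s := \sum_(a in acts G J) (s a - x J a) * cont_value x J a.

Hypothesis PR : perfect_recall G.
Hypothesis wf : wf_game G.

Lemma own_reach_inI x J h : h \in Nodes G -> inI G J h -> owner G J = i ->
  own_reach x (steps t h) = own_reach_at x J.
Proof.
move=> mh iJ oJ; rewrite /own_reach_at !own_reach_obs.
by rewrite -oJ (PR (infoset_node_Nodes J) mh (infoset_node_inI mh iJ) iJ).
Qed.

Let nAM := perfect_recall_not_absentminded wf PR.

Lemma infoset_node_first J : count (isDec J) (steps t (infoset_node J)) = 0%N.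
Proof.
case hJ: (has (inI G J) (Nodes G)).
  have [h mh iJ] := hasP hJ.
  exact: (count_isDec_inI wf nAM (infoset_node_Nodes J) (infoset_node_inI mh iJ)).
by rewrite /infoset_node nth_default // leqNgt -has_find hJ.
Qed.

Lemma step_sub_splits z x h q : h \in Nodes G -> List.In q (splits (steps t h)) ->
  (\prod_(p <- q.1.1) step_factor z p) * (step_factor z q.1.2 - step_factor x q.1.2) *
     \prod_(p <- q.2) step_factor x p =
  \sum_(J | owner G J == i) \sum_(a in acts G J) own_reach_at z J * (z J a - x J a) *
     (if isDec J q.1.2 && (q.1.2.2 == a)
      then others_reach q.1.1 * \prod_(p <- q.2) step_factor x p else 0).
Proof.
move=> mh mq; have [m1 e1 _] := Nodes_splits wf mh mq.
have legal := legal_splits wf mh mq; have iq := inI_splits wf mh mq.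
case: q mq m1 e1 legal iq => [[pre [[f|K] b]] post] /= mq m1 e1 legal iq.
  rewrite /step_factor subrr mulr0 mul0r big1 // => J _; rewrite big1 // => a _.
  by rewrite /isDec /= !mulr0.
have iK := iq K erefl.
case oK: (owner G K == i); last first.
  rewrite /step_factor /replace /= oK subrr mulr0 mul0r big1 // => J oJ; rewrite big1 // => a _.
  by rewrite /isDec /=; case: eqP => [eK|_]; [move: oJ; rewrite -eK oK | rewrite /= !mulr0].
rewrite (bigD1 K) //= [X in _ = _ + X]big1 ?addr0; last first.
  move=> J /andP[_ ne]; rewrite big1 // => a _.
  by rewrite /isDec /= eq_sym (negbTE ne) /= !mulr0.
have pre_reach : \prod_(p <- pre) step_factor z p = own_reach_at z K * others_reach pre.
  by rewrite prod_step_factor -(own_reach_inI z m1 iK (eqP oK)) e1.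
rewrite (eq_bigr (fun a => dirac b a * (own_reach_at z K * (z K a - x K a) *
  (others_reach pre * \prod_(p <- post) step_factor x p)))); last first.
  by move=> a _; rewrite /isDec /dirac /= eqxx eq_sym; case: eqP; rewrite ?mul1r ?mul0r ?mulr0.
rewrite sum_dirac // pre_reach /step_factor /replace /= oK; ring.
Qed.

Lemma reach_replace_sub z x h : h \in Nodes G ->
  reach G (replace G i z pi) h - reach G (replace G i x pi) h =
  \sum_(J | owner G J == i) \sum_(a in acts G J) own_reach_at z J * (z J a - x J a) *
    \sum_(q <- splits (steps t h)) (if isDec J q.1.2 && (q.1.2.2 == a)
      then others_reach q.1.1 * \prod_(p <- q.2) step_factor x p else 0).
Proof.
move=> mh; rewrite !reach_replaceE prodrB_splits.
rewrite (eq_big_In (fun q mq => step_sub_splits z x mh mq)) exchange_big.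
by apply: eq_bigr => J _; rewrite exchange_big; apply: eq_bigr => a _; rewrite mulr_sumr.
Qed.

(* The performance difference identity: telescoping each leaf's reach
   probability along its path, perfect recall lets the own reach of every
   prefix ending at J be read off as [own_reach_at z J]. *)
Lemma EU_replace_sub z x : EU G i (replace G i z pi) - EU G i (replace G i x pi) =
  \sum_(J | owner G J == i) own_reach_at z J * dev_gain x J (z J).
Proof.
rewrite /EU -sumrB big_seq_cond.
under eq_bigr => h /andP[mh _] do rewrite -mulrBl reach_replace_sub // mulr_suml.
rewrite -big_seq_cond exchange_big; apply: eq_bigr => J _.
under eq_bigr => h _ do rewrite mulr_suml.
rewrite exchange_big /dev_gain mulr_sumr; apply: eq_bigr => a _.
by rewrite /cont_value mulrA mulr_sumr; apply: eq_bigr => h _; ring.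
Qed.

Lemma own_reach_deviate_const x J s st :
  count (isDec J) st = 0%N -> own_reach (deviate x J s) st = own_reach x st.
Proof.
rewrite /own_reach; elim: st => [|q st IH]; rewrite ?big_nil ?big_cons //=.
case dq: (isDec J q) => //= h; rewrite IH //; congr (_ * _).
by move: dq; rewrite /isDec /own_factor /deviate; case: q.1 => [f|K] //= /negbT/negbTE ->.
Qed.

Lemma dev_gain_id x J : dev_gain x J (x J) = 0.
Proof. by rewrite /dev_gain big1 // => a _; rewrite subrr mul0r. Qed.

Lemma EU_deviate_replace_sub x J s : owner G J = i ->
  EU G i (deviate (replace G i x pi) J s) - EU G i (replace G i x pi) =
  own_reach_at x J * dev_gain x J s.
Proof.
move=> oJ; rewrite (EU_ext _ _ (deviate_replace x pi s oJ)) EU_replace_sub.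
rewrite (bigD1 J) ?oJ ?eqxx //= big1 ?addr0 => [|K /andP[_ ne]].
  by rewrite /own_reach_at own_reach_deviate_const ?infoset_node_first // /deviate eqxx.
by rewrite /deviate (negbTE ne) dev_gain_id mulr0.
Qed.

Lemma PI_replace x J : owner G J = i ->
  PI G (replace G i x pi) J = own_reach_at x J * others_mass J.
Proof.
move=> oJ; rewrite /PI /others_mass mulr_sumr big_seq_cond [RHS]big_seq_cond.
rewrite (eq_bigl (fun h => (h \in Nodes G) && inI G J h)) => [|h]; last first.
  by case mh: (h \in Nodes G); rewrite //= (firstInE wf nAM).
apply: eq_bigr => h /andP[mh iJ].
by rewrite reach_replaceE prod_step_factor (own_reach_inI x mh iJ oJ).
Qed.

Hypothesis vp : valid_profile G pi.

Lemma others_reach_ge0 h : h \in Nodes G -> 0 <= others_reach (steps t h).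
Proof.
move=> mh; rewrite /others_reach.
apply: (big_ind_In (K := fun r => 0 <= r)) => [||p mp]; [exact: ler01 | exact: mulr_ge0 |].
have := legal_steps wf mh mp; rewrite /legal_step /others_factor.
by case: p {mp} => [[f|K] b] //= ok; case: ifP => // _; apply: (proj1 (vp K)).
Qed.

Lemma others_mass_ge0 J : 0 <= others_mass J.
Proof.
by rewrite /others_mass big_seq_cond sumr_ge0 // => h /andP[mh _]; exact: others_reach_ge0.
Qed.

Lemma own_reach_at_ge0 x J : valid_strat G i x -> 0 <= own_reach_at x J.
Proof.
move=> vx; rewrite /own_reach_at /own_reach.
apply: (big_ind_In (K := fun r => 0 <= r)) => [||p mp]; [exact: ler01 | exact: mulr_ge0 |].
have := legal_steps wf (infoset_node_Nodes J) mp; rewrite /legal_step /own_factor.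
by case: p {mp} => [[f|K] b] //= ok; case: eqP => // oK; apply: (proj1 (vx K oK)).
Qed.

Lemma own_reach_at_gt0 x J :
  (forall K b, owner G K = i -> b \in acts G K -> 0 < x K b) -> 0 < own_reach_at x J.
Proof.
move=> hx; rewrite /own_reach_at /own_reach.
apply: (big_ind_In (K := fun r => 0 < r)) => [||p mp]; [exact: ltr01 | exact: mulr_gt0 |].
have := legal_steps wf (infoset_node_Nodes J) mp; rewrite /legal_step /own_factor.
by case: p {mp} => [[f|K] b] //= ok; case: eqP => // oK; apply: hx.
Qed.

Lemma cont_value_mass0 x J a : others_mass J = 0 -> cont_value x J a = 0.
Proof.
move=> S0; rewrite /cont_value big_seq_cond big1 // => h /andP[mh _].
rewrite (eq_big_In (F' := fun=> 0)) ?big1 ?mulr0 // => q mq.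
case: ifP => // /andP[dq _].
have [m1 e1 _] := Nodes_splits wf mh mq.
have iJ := inI_splits wf mh mq (isDecP dq).
have : all (fun h => (h \in Nodes G) && inI G J h ==> (others_reach (steps t h) == 0))
           (Nodes G).
  rewrite -psumr_eq0 => [|h' /andP[mh' _]]; last exact: others_reach_ge0.
  by rewrite -big_seq_cond -/(others_mass J) S0.
by move/allP/(_ _ m1); rewrite m1 iJ e1 /= => /eqP ->; rewrite mul0r.
Qed.

End PerfectRecall.

Section EDTRationalOptimal.
Variables (R : realType) (Pl Info Act : finType) (G : game R Pl Info Act).
Variables (i : Pl) (pi : Info -> Act -> R).
Hypothesis PR : perfect_recall G.
Hypothesis wf : wf_game G.
Hypothesis vp : valid_profile G pi.
Notation own_reach_at := (own_reach_at G i).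
Notation others_mass := (others_mass G i pi).

Lemma cvg_EU_replace (x : nat -> Info -> Act -> R) y :
  (forall I a, owner G I = i -> a \in acts G I -> (fun k => x k I a) @ \oo --> y I a) ->
  (fun k => EU G i (replace G i (x k) pi)) @ \oo --> EU G i (replace G i y pi).
Proof.
move=> cx; rewrite /EU big_seq_cond; under eq_fun do rewrite big_seq_cond.
apply: cvg_big => [|h /andP[mh _]]; first exact: add_continuous.
apply: cvgM; last exact: cvg_cst.
apply: cvg_prod_In => p mp; have := legal_steps wf mh mp.
rewrite /legal_step /replace; case: p {mp} => [[f|K] b] /= ok; first exact: cvg_cst.
by case: eqP => oK; [exact: cx | exact: cvg_cst].
Qed.

(* Rationality bounds the gain of every one-shot deviation at J by
   [eps k * others_mass J] up to the factor [own_reach_at], and the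
   performance difference identity adds these bounds up. *)
Lemma EDT_rational_optimal y : EDT_rational G i pi y ->
  forall z, valid_strat G i z -> EU G i (replace G i z pi) <= EU G i (replace G i y pi).
Proof.
move=> [x [eps [[vx px cx ep ceps] hr]]] z vz.
set C := \sum_(J | owner G J == i) own_reach_at z J * others_mass J.
have bound k : EU G i (replace G i z pi) <= EU G i (replace G i (x k) pi) + eps k * C.
  rewrite -lerBlDl EU_replace_sub // /C mulr_sumr; apply: ler_sum => J /eqP oJ.
  rewrite mulrCA; apply: ler_wpM2l; first exact: own_reach_at_ge0.
  have [S0|Sn0] := eqVneq (others_mass J) 0.
    by rewrite S0 mulr0 /dev_gain big1 // => a _; rewrite cont_value_mass0 // mulr0.
  have Sgt : 0 < others_mass J by rewrite lt0r Sn0 others_mass_ge0.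
  have cgt : 0 < own_reach_at (x k) J by apply: own_reach_at_gt0 => // K b; apply: px.
  have := hr k J (z J) oJ; rewrite PI_replace // pmulr_rgt0 // => /(_ Sgt (vz J oJ)).
  by rewrite EU_deviate_replace_sub // ler_pdivrMr ?mulr_gt0 // mulrCA ler_pM2l.
apply: (@cvgr_to_ge _ \oo _ _ _ _ _ _ (nearW _ bound)).
rewrite -[EU G i (replace G i y pi)]addr0 -(mul0r C).
apply: cvgD; first exact: cvg_EU_replace.
by apply: cvgM => //; exact: cvg_cst.
Qed.

End EDTRationalOptimal.

Lemma dirac_argmax_gain (R : realType) (Act : finType) (A : {set Act}) (f : Act -> R) b :
  b \in A -> (forall a, a \in A -> f a <= f b) ->
  forall s, isDist A s -> \sum_(a in A) (s a - dirac b a) * f a <= 0.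
Proof.
move=> bA bmax s [s0 s1]; under eq_bigr => a _ do rewrite mulrBl.
rewrite sumrB sum_dirac // subr_le0 (@le_trans _ _ (\sum_(a in A) s a * f b)) //.
  by apply: ler_sum => a aA; apply: ler_wpM2l; [exact: s0 | exact: bmax].
by rewrite -mulr_suml s1 mul1r.
Qed.

Section SequentialOptimality.
Variables (R : realType) (Pl Info Act : finType) (G : game R Pl Info Act).
Variables (i : Pl) (pi : Info -> Act -> R).
Hypothesis PR : perfect_recall G.
Hypothesis wf : wf_game G.
Hypothesis vp : valid_profile G pi.
Notation label := (label R Info Act).
Notation t := (gtree G).
Notation dec J := (@Dec R Info Act J).
Notation own_reach_at := (own_reach_at G i).
Notation others_mass := (others_mass G i pi).
Notation cont_value := (cont_value G i pi).
Notation dev_gain := (dev_gain G i pi).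
Implicit Types (x y : Info -> Act -> R) (J K : Info) (h : seq Act)
  (q : seq (label * Act) * (label * Act) * seq (label * Act)).

Definition own_rank J : nat := count (owned_by G i) (steps t (infoset_node G J)).

Lemma own_rank_inI J h : h \in Nodes G -> inI G J h -> owner G J = i ->
  own_rank J = count (owned_by G i) (steps t h).
Proof.
move=> mh iJ oJ; rewrite /own_rank -!size_obs_i -oJ.
by rewrite (PR (infoset_node_Nodes G J) mh (infoset_node_inI mh iJ) iJ).
Qed.

Lemma own_rank_post h q q' J b K b' : h \in Nodes G ->
  List.In q (splits (steps t h)) -> q.1.2 = (dec J, b) -> owner G J = i ->
  List.In q' (splits q.2) -> q'.1.2 = (dec K, b') -> owner G K = i ->
  (own_rank J < own_rank K)%N.
Proof.
move=> mh mq eq oJ mq' eq' oK; have mq'' := splits_post mq mq'.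
have [m1 e1 _] := Nodes_splits wf mh mq; have [m2 e2 _] := Nodes_splits wf mh mq''.
rewrite (own_rank_inI m1 (inI_splits wf mh mq (congr1 fst eq)) oJ).
rewrite (own_rank_inI m2 (inI_splits wf mh mq'' (congr1 fst eq')) oK) e1 e2 /=.
by rewrite count_cat /= eq /owned_by /= oJ eqxx add1n -addSnnS leq_addr.
Qed.

Lemma own_rank_pre h q q' J b K b' : h \in Nodes G ->
  List.In q (splits (steps t h)) -> q.1.2 = (dec J, b) -> owner G J = i ->
  List.In q' (splits q.1.1) -> q'.1.2 = (dec K, b') -> owner G K = i ->
  (own_rank K < own_rank J)%N.
Proof.
move=> mh mq eq oJ mq' eq' oK; have mq'' := splits_pre mq mq'.
have [m1 e1 _] := Nodes_splits wf mh mq; have [m2 e2 _] := Nodes_splits wf mh mq''.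
rewrite (own_rank_inI m1 (inI_splits wf mh mq (congr1 fst eq)) oJ).
rewrite (own_rank_inI m2 (inI_splits wf mh mq'' (congr1 fst eq')) oK) e1 e2 /=.
rewrite -(cat_splits mq') count_cat /= eq'.
by rewrite /owned_by /= oK eqxx add1n -addSnnS leq_addr.
Qed.

Lemma cont_value_local x x' J a : owner G J = i ->
  (forall K b, owner G K = i -> (own_rank J < own_rank K)%N -> x K b = x' K b) ->
  cont_value x J a = cont_value x' J a.
Proof.
move=> oJ hx; rewrite /cont_value big_seq_cond [RHS]big_seq_cond.
apply: eq_bigr => h /andP[mh _]; congr (_ * _); apply: eq_big_In => q mq.
case: ifP => // /andP[dq _]; congr (_ * _); apply: eq_big_In => p mp.
have [q' mq' eq'] := splits_of_In mp.
rewrite /step_factor /replace; case ep: p => [[f|K] b] //=.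
case: eqP => // oK; apply: hx => //.
have e1 : q.1.2 = (dec J, q.1.2.2) by rewrite -(isDecP dq); case: q.1.2.
by apply: (own_rank_post mh mq e1 oJ mq' _ oK); rewrite eq' ep.
Qed.

Lemma own_reach_local x x' st :
  (forall q, List.In q (splits st) -> forall K b, q.1.2 = (dec K, b) ->
     owner G K = i -> x K b = x' K b) ->
  own_reach G i x st = own_reach G i x' st.
Proof.
move=> h; apply: eq_big_In => p mp; have [q mq eq] := splits_of_In mp.
rewrite /own_factor; case ep: p => [[f|K] b] //=; case: eqP => // oK.
by apply: (h q mq _ _ _ oK); rewrite eq ep.
Qed.

Lemma real_equiv_refl : real_equiv G i pi pi.
Proof. by move=> h _; exact: reach_ext (replace_self G i pi). Qed.

Lemma own_reach_at_real_equiv y K : real_equiv G i pi y -> owner G K = i ->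
  0 < others_mass K -> own_reach_at y K = own_reach_at pi K.
Proof.
move=> re oK Sp.
have : has (fun h => ((h \in Nodes G) && inI G K h) &&
                     (0 < others_reach G i pi (steps t h))) (Nodes G).
  rewrite -psumr_neq0 => [|h /andP[mh _]]; last exact: others_reach_ge0.
  by rewrite -big_seq_cond lt0r_neq0.
case/hasP => h _ /andP[/andP[mh iK] op].
have := re h mh; rewrite -(real_equiv_refl mh) !reach_replaceE !prod_step_factor.
rewrite (own_reach_inI PR y mh iK oK) (own_reach_inI PR pi mh iK oK).
by move/(mulIf (lt0r_neq0 op)).
Qed.

Definition unreached_at r K : bool :=
  [&& owner G K == i, own_rank K == r, 0 < others_mass K & own_reach_at pi K == 0].

(* Every path through an infoset K with [unreached_at r K] has own reach
   [own_reach_at pi K = 0] before K, since the infosets of i before K have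
   smaller rank and keep their behaviour. *)
Lemma real_equiv_modify y y' r : real_equiv G i pi y ->
  (forall K, ~~ unreached_at r K -> y' K = y K) -> real_equiv G i pi y'.
Proof.
move=> re hy h mh; rewrite -(re h mh); apply/eqP; rewrite -subr_eq0; apply/eqP.
rewrite !reach_replaceE prodrB_splits (eq_big_In (F' := fun=> 0)) ?big1 // => q mq.
have [m1 e1 _] := Nodes_splits wf mh mq.
case eq: q.1.2 => [[f|K] b]; first by rewrite /step_factor subrr mulr0 mul0r.
have [MK|nMK] := boolP (unreached_at r K); last first.
  by rewrite /step_factor /replace /= (hy K nMK) subrr mulr0 mul0r.
case/and4P: MK => /eqP oK /eqP rK Sp /eqP c0.
have iK := inI_splits wf mh mq (congr1 fst eq).
suff -> : \prod_(p <- q.1.1) step_factor G i pi y' p = 0 by rewrite !mul0r.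
rewrite prod_step_factor (@own_reach_local _ y); last first.
  move=> q' mq' K' b' eq' oK'; rewrite hy //.
  apply: contraTN (own_rank_pre mh mq eq oK mq' eq' oK') => /and4P[_ /eqP rK' _ _].
  by rewrite rK' rK ltnn.
by rewrite -e1 (own_reach_inI PR y m1 iK oK) (own_reach_at_real_equiv re oK Sp) c0 mul0r.
Qed.

Definition unreached_optimal r y := forall J, owner G J = i -> (r <= own_rank J)%N ->
  0 < others_mass J -> own_reach_at pi J = 0 ->
  forall s, isDist (acts G J) s -> dev_gain y J s <= 0.

Definition seq_optimal y := forall J, owner G J = i -> 0 < others_mass J ->
  forall s, isDist (acts G J) s -> dev_gain y J s <= 0.

Lemma exists_best_response y : exists d : Info -> Act -> R, forall K,
  isDist (acts G K) (d K) /\ forall s, isDist (acts G K) s ->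
    \sum_(a in acts G K) (s a - d K a) * cont_value y K a <= 0.
Proof.
suff /boolp.choice [b hb] : forall K, exists b, b \in acts G K /\
    forall a, a \in acts G K -> cont_value y K a <= cont_value y K b.
  exists (fun K => dirac (b K)) => K; have [bA bmax] := hb K.
  by split; [exact: dirac_isDist | exact: dirac_argmax_gain].
move=> K; have [a0 a0A] : exists a, a \in acts G K.
  by have := (proj1 wf) K; rewrite card_gt0 => /set0Pn.
case: (@arg_maxP _ _ _ a0 (fun a => a \in acts G K) (cont_value y K) a0A) => b bA bmax.
by exists b.
Qed.

(* Continuation values at rank r depend only on the behaviour at higher
   ranks, so the best responses at the unreached infosets of rank r can be
   computed against y. *)
Lemma unreached_optimal_pred r y : valid_strat G i y -> real_equiv G i pi y ->
  unreached_optimal r.+1 y ->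
  exists y', [/\ valid_strat G i y', real_equiv G i pi y' & unreached_optimal r y'].
Proof.
move=> vy re hy; have [d hd] := exists_best_response y.
pose y' K := if unreached_at r K then d K else y K.
have cv_y' J a : owner G J = i -> (r <= own_rank J)%N -> cont_value y' J a = cont_value y J a.
  move=> oJ rJ; apply: cont_value_local => // K b oK lt.
  rewrite /y'; case: ifP => // /and4P[_ /eqP rK _ _].
  by move: lt; rewrite rK ltnNge rJ.
exists y'; split.
- by move=> K oK; rewrite /y'; case: ifP => _; [exact: (hd K).1 | exact: vy].
- by apply: (real_equiv_modify (r := r) re) => K /negbTE nMK; rewrite /y' nMK.
- move=> J oJ rJ Sp c0 s sd; rewrite /dev_gain.
  under eq_bigr => a _ do rewrite (cv_y' J a oJ rJ).
  have [er|ne] := eqVneq (own_rank J) r.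
    have MJ : unreached_at r J by rewrite /unreached_at oJ er Sp c0 !eqxx.
    by rewrite /y' MJ; exact: (hd J).2.
  have nMJ : unreached_at r J = false by rewrite /unreached_at (negbTE ne) andbF.
  by rewrite /y' nMJ; apply: hy => //; rewrite ltn_neqAle eq_sym ne rJ.
Qed.

Lemma exists_unreached_optimal r :
  exists y, [/\ valid_strat G i y, real_equiv G i pi y & unreached_optimal r y].
Proof.
pose r0 := (\max_J own_rank J).+1.
suff: forall n r, (r0 <= r + n)%N ->
    exists y, [/\ valid_strat G i y, real_equiv G i pi y & unreached_optimal r y].
  by move/(_ r0 r); apply; rewrite leq_addl.
elim=> [|n IH] {}r le_r.
  exists pi; split => [K _|| J _ rJ]; [exact: vp | exact: real_equiv_refl |].
  by move: le_r; rewrite addn0 => /leq_trans/(_ rJ); rewrite ltnNge leq_bigmax.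
have /IH [y [vy re hy]] : (r0 <= r.+1 + n)%N by rewrite addSnnS.
exact: unreached_optimal_pred vy re hy.
Qed.

Lemma EU_real_equiv y : real_equiv G i pi y -> EU G i (replace G i y pi) = EU G i pi.
Proof.
move=> re; rewrite /EU big_seq_cond [RHS]big_seq_cond.
by apply: eq_bigr => h /andP[mh _]; rewrite re.
Qed.

(* At infosets that i's own play reaches, optimality comes from the Nash
   condition; at the others, from backward induction. *)
Lemma Nash_seq_optimal : Nash G pi ->
  exists y, [/\ valid_strat G i y, real_equiv G i pi y & seq_optimal y].
Proof.
move=> NE; have [y [vy re hy]] := exists_unreached_optimal 0.
exists y; split => // J oJ Sp s sd.
have [c0|cn0] := eqVneq (own_reach_at pi J) 0; first exact: hy.
have cgt : 0 < own_reach_at y J.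
  by rewrite (own_reach_at_real_equiv re oJ Sp) lt0r cn0 own_reach_at_ge0 // => K _; exact: vp.
have vd : valid_strat G i (deviate y J s).
  by move=> K oK; rewrite /deviate; case: eqP => [->|_]; [exact: sd | exact: vy].
have := NE i _ vd; rewrite -(EU_ext _ _ (deviate_replace y pi s oJ)) -(EU_real_equiv re).
by rewrite -subr_le0 EU_deviate_replace_sub // pmulr_rle0.
Qed.

End SequentialOptimality.

Lemma isDist_le1 (R : realType) (Act : finType) (A : {set Act}) (s : Act -> R) a :
  isDist A s -> a \in A -> s a <= 1.
Proof.
move=> [s0 s1] aA; rewrite -s1 (bigD1 a) //= lerDl sumr_ge0 // => b /andP[bA _].
exact: s0.
Qed.

Definition tremble_rate (R : realType) (k : nat) : R := k.+1%:R^-1.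

Lemma tremble_rate_gt0 (R : realType) k : 0 < tremble_rate R k.
Proof. by rewrite /tremble_rate invr_gt0 ltr0n. Qed.

Lemma tremble_rate_le1 (R : realType) k : tremble_rate R k <= 1.
Proof. by rewrite /tremble_rate invf_le1 ?ltr0n // ler1n. Qed.

Lemma cvg_tremble_rate (R : realType) : tremble_rate R @ \oo --> 0.
Proof. exact: cvg_harmonic. Qed.

Section Trembles.
Variables (R : realType) (Pl Info Act : finType) (G : game R Pl Info Act).
Variables (i : Pl) (pi : Info -> Act -> R).
Hypothesis PR : perfect_recall G.
Hypothesis wf : wf_game G.
Hypothesis vp : valid_profile G pi.
Notation own_reach_at := (own_reach_at G i).
Notation others_mass := (others_mass G i pi).
Notation cont_value := (cont_value G i pi).
Notation dev_gain := (dev_gain G i pi).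
Implicit Types (x y : Info -> Act -> R) (J K : Info) (a : Act) (s : Act -> R).

Lemma cvg_cont_value (x : nat -> Info -> Act -> R) y J a :
  (forall K b, (fun k => x k K b) @ \oo --> y K b) ->
  (fun k => cont_value (x k) J a) @ \oo --> cont_value y J a.
Proof.
move=> cx; apply: cvg_big => [|h _]; first exact: add_continuous.
apply: cvgM; first exact: cvg_cst.
apply: cvg_big => [|q _]; first exact: add_continuous.
case: ifP => _; last exact: cvg_cst.
apply: cvgM; first exact: cvg_cst.
apply: cvg_big => [|p _]; first exact: mul_continuous.
rewrite /step_factor /replace; case: p => [[f|K] b] /=; first exact: cvg_cst.
by case: eqP => _; [exact: cx | exact: cvg_cst].
Qed.

Definition cont_gap x y J := \sum_(a in acts G J)
  (`|cont_value x J a - cont_value y J a| +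
   `|x J a * cont_value x J a - y J a * cont_value y J a|).

Lemma cont_gap_ge0 x y J : 0 <= cont_gap x y J.
Proof. by rewrite sumr_ge0 // => a _; rewrite addr_ge0. Qed.

Lemma cont_gap_id y J : cont_gap y y J = 0.
Proof. by rewrite /cont_gap big1 // => a _; rewrite !subrr normr0 addr0. Qed.

Lemma cvg_cont_gap (x : nat -> Info -> Act -> R) y J :
  (forall K b, (fun k => x k K b) @ \oo --> y K b) ->
  (fun k => cont_gap (x k) y J) @ \oo --> cont_gap y y J.
Proof.
move=> cx; apply: cvg_big => [|a _]; first exact: add_continuous.
have cv : (fun k => cont_value (x k) J a) @ \oo --> cont_value y J a by exact: cvg_cont_value.
apply: cvgD; apply: cvg_norm.
  exact: cvgB cv (cvg_cst _).
exact: cvgB (cvgM (cx J a) cv) (cvg_cst _).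
Qed.

Lemma dev_gain_le_gap x y J s :
  isDist (acts G J) s -> dev_gain x J s <= dev_gain y J s + cont_gap x y J.
Proof.
move=> sd; rewrite -lerBlDl /dev_gain /cont_gap -sumrB; apply: ler_sum => a aA.
have -> : (s a - x J a) * cont_value x J a - (s a - y J a) * cont_value y J a =
  s a * (cont_value x J a - cont_value y J a) -
  (x J a * cont_value x J a - y J a * cont_value y J a) by ring.
apply: le_trans (ler_norm _) _; apply: le_trans (ler_normB _ _) _; apply: lerD => //.
rewrite normrM ler_piMl // ger0_norm; [exact: isDist_le1 sd aA | exact: (proj1 sd)].
Qed.

Definition tremble y k : Info -> Act -> R :=
  fun K a => (1 - tremble_rate R k) * y K a + tremble_rate R k / #|acts G K|%:R.

(* The first summand makes [eps k] positive, the others absorb the gaps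
   between the deviation gains of the trembled strategy and of y. *)
Definition tremble_eps y k :=
  tremble_rate R k + \sum_(J | owner G J == i) cont_gap (tremble y k) y J / others_mass J.

Lemma tremble_valid y k : valid_strat G i y -> valid_strat G i (tremble y k).
Proof.
move=> vy K oK; have [y0 y1] := vy K oK; have nA := (proj1 wf) K; split.
  move=> a aA; apply: addr_ge0; first by rewrite mulr_ge0 ?subr_ge0 ?tremble_rate_le1 ?y0.
  by rewrite divr_ge0 ?ler0n // ltW ?tremble_rate_gt0.
rewrite /tremble big_split /= -mulr_sumr y1 mulr1 sumr_const -[X in _ + X]mulr_natr.
by rewrite divfK ?subrK // pnatr_eq0 -lt0n.
Qed.

Lemma tremble_gt0 y k K a : valid_strat G i y -> owner G K = i -> a \in acts G K ->
  0 < tremble y k K a.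
Proof.
move=> vy oK aA; rewrite ltr_wpDl ?mulr_ge0 ?subr_ge0 ?tremble_rate_le1 //.
  exact: (proj1 (vy K oK)).
by rewrite divr_gt0 ?tremble_rate_gt0 // ltr0n (proj1 wf).
Qed.

Lemma cvg_tremble y K a : (fun k => tremble y k K a) @ \oo --> y K a.
Proof.
suff: (fun k => tremble y k K a) @ \oo --> (1 - 0) * y K a + 0 / #|acts G K|%:R.
  by rewrite subr0 mul1r mul0r addr0.
apply: cvgD; apply: cvgM; try exact: cvg_cst.
- by apply: cvgB; [exact: cvg_cst | exact: cvg_tremble_rate].
- exact: cvg_tremble_rate.
Qed.

Lemma tremble_eps_gt0 y k : 0 < tremble_eps y k.
Proof.
rewrite ltr_wpDr ?tremble_rate_gt0 // sumr_ge0 // => J _.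
by rewrite divr_ge0 ?cont_gap_ge0 ?others_mass_ge0.
Qed.

Lemma cvg_tremble_eps y : tremble_eps y @ \oo --> 0.
Proof.
rewrite -[0]addr0; apply: cvgD; first exact: cvg_tremble_rate.
suff: (fun k => \sum_(J | owner G J == i) cont_gap (tremble y k) y J / others_mass J) @ \oo -->
    \sum_(J | owner G J == i) cont_gap y y J / others_mass J.
  by rewrite big1 // => J _; rewrite cont_gap_id mul0r.
apply: cvg_big => [|J _]; first exact: add_continuous.
by apply: cvgM; [apply: cvg_cont_gap => K b; exact: cvg_tremble | exact: cvg_cst].
Qed.

(* The trembles witness EDT-rationality: at an infoset that the trembled
   strategy reaches, the deviation gain is that of y, which is nonpositive by
   sequential optimality, plus a gap that [tremble_eps] absorbs. *)
Lemma seq_optimal_EDT_rational y : valid_strat G i y -> seq_optimal G i pi y ->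
  EDT_rational G i pi y.
Proof.
move=> vy so; exists (tremble y), (tremble_eps y); split.
  split=> [k|k K a oK aA|K a _ _|k|]; [exact: tremble_valid | exact: tremble_gt0 |
    exact: cvg_tremble | exact: tremble_eps_gt0 | exact: cvg_tremble_eps].
move=> k J s oJ PIp sd.
have cgt : 0 < own_reach_at (tremble y k) J.
  by apply: own_reach_at_gt0 => // K b oK bK; apply: tremble_gt0.
move: PIp; rewrite (PI_replace _ PR wf) // pmulr_rgt0 // => Sp.
rewrite (EU_deviate_replace_sub _ PR wf) // ler_pdivrMr ?mulr_gt0 // mulrCA ler_pM2l //.
apply: le_trans (dev_gain_le_gap (tremble y k) y sd) _.
apply: le_trans (lerD (so J oJ Sp s sd) (lexx _)) _; rewrite add0r.
rewrite -[cont_gap _ _ _](divfK (lt0r_neq0 Sp)) ler_wpM2r ?others_mass_ge0 //.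
rewrite /tremble_eps (bigD1 J) ?oJ //= addrA ler_wpDr //.
  by rewrite sumr_ge0 // => K _; rewrite divr_ge0 ?cont_gap_ge0 ?others_mass_ge0.
by rewrite lerDr ltW ?tremble_rate_gt0.
Qed.

End Trembles.

Unset Implicit Arguments.
Theorem proposition4 (R : realType) (Pl Info Act : finType)
  (G : game R Pl Info Act) (pi : Info -> Act -> R) :
  wf_game G -> valid_profile G pi ->
  [/\ EDT_Nash G pi -> EDT_eq G pi,
      ~ absentminded G -> (EDT_Nash G pi <-> CDT_Nash G pi)
    & perfect_recall G -> (EDT_Nash G pi <-> Nash G pi)].
Proof.
move=> wf vp; split=> [[]//|nAM|PR]; first exact: EDT_Nash_iff_CDT_Nash.
split=> [[_ rat] i z vz | NE].
  have [y [_ ry re]] := rat i.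
  by rewrite -(EU_real_equiv re); exact: EDT_rational_optimal.
split=> [|i]; first exact: Nash_EDT_eq.
have [y [vy re so]] := Nash_seq_optimal i PR wf vp NE.
by exists y; split=> //; exact: seq_optimal_EDT_rational.
Qed.
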